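(* Let $\mathcal{G}=(\mathcal{V},\mathcal{E})$ be a DAG with treatment $A$ and outcome $Y$ satisfying the assumptions of the context, and let $K\subseteq\mathcal{V}\setminus\{A,Y\}$. Then there exists $Z\subseteq\mathcal{V}\setminus\{A,Y\}$ such that $K\cup Z$ is a $K$-irreducible adjustment set for estimating the average treatment effect $\tau$ of $A$ on $Y$. Moreover, every variable $Z_i\in Z$ is an extended confounding variable.
   Context: $\mathcal{G}=(\mathcal{V},\mathcal{E})$ is a DAG containing treatment $A$ and outcome $Y$ with an edge $A\to Y$, with variables following a linear Gaussian SEM Markov and faithful to $\mathcal{G}$, and no variable of $\mathcal{V}\setminus\{A,Y\}$ a descendant of $A$. $\mathcal{G}'$ is $\mathcal{G}$ with the edge $A\to Y$ removed. A set $Z\subseteq\mathcal{V}\setminus\{A,Y\}$ is a valid adjustment set if the OLS estimator of the coefficient of $A$ in the regression of $Y$ on $A$ and $Z$ is unbiased for $\tau$ for every distribution Markov to $\mathcal{G}$; under these assumptions this is equivalent to $A$ and $Y$ being d-separated given $Z$ in $\mathcal{G}'$. For $K\subseteq Z$, a valid adjustment set $Z$ is $K$-irreducible if there is no proper subset $Z'\subsetneq Z$ with $K\subseteq Z'$ that is a valid adjustment set. A variable $V\in\mathcal{V}\setminus\{A,Y\}$ is an extended confounding variable if in $\mathcal{G}'$ it is d-connected to $A$ given some $K\subseteq\mathcal{V}\setminus\{A,Y\}$ and d-connected to $Y$ given some $L\subseteq\mathcal{V}\setminus\{A,Y\}$. *)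

From mathcomp Require Import all_boot.
Set Implicit Arguments. Unset Strict Implicit. Unset Printing Implicit Defensive.

Section Graphs.
Variable V : finType.
Implicit Types (e : rel V) (Z K : {set V}).

(* e u v means the directed edge u -> v. *)
Definition acyclic e : Prop := forall u v, e u v -> ~~ connect e v u.

Definition adj e : rel V := fun u v => e u v || e v u.

(* A collider (u -> w <- v) is open given Z iff w has a descendant in Z
   (including w itself); a non-collider is open iff w is not in Z. *)
Definition open_at e Z (u w v : V) : bool :=
  if e u w && e v w then [exists z in Z, connect e w z] else w \notin Z.

Fixpoint active_triples e Z (u w : V) (s : seq V) : bool :=
  match s with
  | [::] => true
  | v :: s' => open_at e Z u w v && active_triples e Z w v s'
  end.

Definition active e Z (x : V) (s : seq V) : bool :=
  match s with
  | [::] => true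
  | w :: s' => active_triples e Z x w s'
  end.

Definition dconnected e Z (x y : V) : Prop :=
  x \notin Z /\ y \notin Z /\
  exists s : seq V,
    [/\ path (adj e) x s, last x s = y, uniq (x :: s) & active e Z x s].

Definition dseparated e Z x y : Prop := ~ dconnected e Z x y.

Definition remove_edge e (A Y : V) : rel V :=
  fun u v => e u v && ~~ ((u == A) && (v == Y)).

(* Valid adjustment set (graphical characterization given in the context). *)
Definition valid_adjustment e (A Y : V) Z : Prop :=
  Z \subset ~: [set A; Y] /\ dseparated (remove_edge e A Y) Z A Y.

Definition K_irreducible e (A Y : V) K Z : Prop :=
  valid_adjustment e A Y Z /\ K \subset Z /\
  ~ (exists Z' : {set V}, Z' \proper Z /\ K \subset Z' /\ valid_adjustment e A Y Z').

Definition extended_confounding e (A Y : V) (v : V) : Prop :=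
  v \in ~: [set A; Y] /\
  (exists K : {set V}, K \subset ~: [set A; Y] /\ dconnected (remove_edge e A Y) K v A) /\
  (exists L : {set V}, L \subset ~: [set A; Y] /\ dconnected (remove_edge e A Y) L v Y).

End Graphs.

(* The set of all covariates V \ {A, Y} is a valid adjustment set: in G' every
   path leaving A starts with an edge w -> A (A has no other descendants), so
   w is a non-collider in the conditioning set, and the one-edge path A - Y
   would need the edge Y -> A, which acyclicity forbids.  Hence some valid set
   containing K is minimal among valid sets containing K; take Z to be its
   part outside K.  Removing any z in Z opens a path from A to Y, and that
   path must pass through z, since it is blocked once z is conditioned on
   again.  Cut at z, the two halves of the path d-connect z to A and z to Y,
   so z is an extended confounding variable. *)

From mathcomp Require Import all_boot.
From mathcomp Require Import boolp.
Set Implicit Arguments. Unset Strict Implicit. Unset Printing Implicit Defensive.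

Section ActivePaths.
Variable V : finType.
Implicit Types (f : rel V) (Z : {set V}) (x y z : V) (s : seq V).

Definition active_path f Z x s y : bool :=
  [&& path (adj f) x s, last x s == y, uniq (x :: s) & active f Z x s].

Lemma dconnectedP f Z x y :
  dconnected f Z x y <->
  [/\ x \notin Z, y \notin Z & exists s, active_path f Z x s y].
Proof.
split=> [[xZ [yZ [s [? /eqP ? ? ?]]]] | [xZ yZ [s /and4P[? /eqP ? ? ?]]]].
  by split=> //; exists s; apply/and4P.
by split=> //; split=> //; exists s.
Qed.

Lemma adjC f u v : adj f u v = adj f v u.
Proof. by rewrite /adj orbC. Qed.

Lemma open_atC f Z u w v : open_at f Z u w v = open_at f Z v w u.
Proof. by rewrite /open_at andbC. Qed.

Lemma active_of_triples f Z x a s : active_triples f Z x a s -> active f Z a s.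
Proof. by case: s => [|b s] //= /andP[]. Qed.

Lemma active_catr f Z x s1 s2 :
  active f Z x (s1 ++ s2) -> active f Z (last x s1) s2.
Proof. by elim: s1 x => [|a s1 IH] x //= /active_of_triples/IH. Qed.

Lemma active_triples_catl f Z x a s1 s2 :
  active_triples f Z x a (s1 ++ s2) -> active_triples f Z x a s1.
Proof. by elim: s1 x a => [|b s1 IH] x a //= /andP[-> /IH]. Qed.

Lemma active_catl f Z x s1 s2 : active f Z x (s1 ++ s2) -> active f Z x s1.
Proof. by case: s1 => [|a s1] //= /active_triples_catl. Qed.

Lemma active_triples_rcons f Z u w s c :
  active_triples f Z u w (rcons s c) =
  active_triples f Z u w s && open_at f Z (last u (belast w s)) (last w s) c.
Proof.
by elim: s u w => [|v s IH] u w /=; rewrite ?andbT // IH andbA.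
Qed.

Lemma active_triples_rev f Z u w s v :
  active_triples f Z u w (rcons s v) ->
  active_triples f Z v (last w s) (rcons (rev (belast w s)) u).
Proof.
elim/last_ind: s v => [|s x IH] v /=; first by rewrite !andbT open_atC.
rewrite active_triples_rcons belast_rcons last_rcons /= => /andP[act_s open_x].
by rewrite [w :: s]lastI rev_rcons /= open_atC open_x (IH _ act_s).
Qed.

Lemma active_rev f Z x p z :
  active f Z x (rcons p z) -> active f Z z (rcons (rev p) x).
Proof.
by case: p => [|w p] //= /active_triples_rev; rewrite [w :: p]lastI rev_rcons.
Qed.

Lemma active_triples_setD1 f Z z u w s : z \notin w :: s ->
  active_triples f (Z :\ z) u w s -> active_triples f Z u w s.
Proof.
elim: s u w => [|v s IH] u w //=.
rewrite in_cons negb_or => /andP[zw zvs] /andP[open_w act_s].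
rewrite (IH _ _ zvs act_s) andbT; move: open_w; rewrite /open_at.
case: ifP => _; last by rewrite !inE negb_and negbK eq_sym (negbTE zw).
case/existsP=> d /andP[dZ wd]; apply/existsP; exists d.
by move: dZ; rewrite !inE => /andP[_ ->].
Qed.

Lemma active_setD1 f Z z x s : z \notin s ->
  active f (Z :\ z) x s -> active f Z x s.
Proof. by case: s => [|w s] //; apply: active_triples_setD1. Qed.

Lemma active_path_cat f Z x s1 s2 y :
  active_path f Z x (s1 ++ s2) y ->
  active_path f Z x s1 (last x s1) && active_path f Z (last x s1) s2 y.
Proof.
case/and4P; rewrite cat_path last_cat -cat_cons cat_uniq.
move=> /andP[p1 p2] lst /and3P[u1 dis u2] act.
rewrite /active_path p1 p2 lst u1 eqxx /=.
rewrite (active_catl act) (active_catr act) u2 !andbT.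
by apply: contra dis => last_s2; apply/hasP; exists (last x s1); rewrite ?mem_last.
Qed.

Lemma active_path_rev f Z x p z :
  active_path f Z x (rcons p z) z -> active_path f Z z (rcons (rev p) x) x.
Proof.
case/and4P=> pth _ uq act; apply/and4P; split.
- have := rev_path (adj f) x (rcons p z).
  by rewrite last_rcons belast_rcons rev_cons -(eq_path (adjC f)) => ->.
- by rewrite last_rcons.
- by rewrite -rev_uniq rev_cons rev_rcons in uq.
- exact: active_rev.
Qed.

Lemma active_path_setD1 f Z z x s y : z \notin s ->
  active_path f (Z :\ z) x s y -> active_path f Z x s y.
Proof.
by move=> zs /and4P[? ? ? act]; apply/and4P; split=> //; apply: active_setD1 act.
Qed.

Lemma dconnected_setD1_through f Z z x y :
  x \notin Z -> y \notin Z -> dseparated f Z x y ->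
  dconnected f (Z :\ z) x y ->
  dconnected f (Z :\ z) z x /\ dconnected f (Z :\ z) z y.
Proof.
move=> xZ yZ sep /dconnectedP[xZz yZz [s act]].
have zs : z \in s.
  apply: contraT => zs; case: sep; apply/dconnectedP; split=> //.
  by exists s; apply: active_path_setD1 act.
have zZz : z \notin Z :\ z by rewrite !inE eqxx.
case/splitPr: zs act => p1 p2; rewrite -cat_rcons => /active_path_cat.
rewrite last_rcons => /andP[/active_path_rev act1 act2].
by split; apply/dconnectedP; split=> //; [exists (rcons (rev p1) x) | exists p2].
Qed.

End ActivePaths.

Lemma valid_adjustment_setC (V : finType) (e : rel V) (A Y : V) :
  acyclic e -> A != Y -> e A Y ->
  (forall v : V, v != A -> v != Y -> ~~ connect e A v) ->
  valid_adjustment e A Y (~: [set A; Y]).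
Proof.
move=> acyc AY eAY nodesc; split=> //; rewrite /dseparated.
case/dconnectedP=> _ _ [[|w [|v s]]].
- by case/and4P=> _ /= /eqP AY'; rewrite AY' eqxx in AY.
- case/and4P=> /= + /eqP wY _ _.
  rewrite wY /adj /remove_edge !eqxx eq_sym (negbTE AY) /= !andbT andbF => eYA.
  by have := acyc _ _ eAY; rewrite connect1.
case/and4P=> _ /= /eqP lst /andP[Aws /andP[wvs _]] /andP[open_w _].
have wA : w != A by move: Aws; rewrite in_cons negb_or eq_sym => /andP[].
have wY : w != Y by rewrite -lst; apply: contraNneq wvs => ->; apply: mem_last.
have eAw : e A w = false by apply: contraNF (nodesc w wA wY); apply: connect1.
move: open_w; rewrite /open_at /remove_edge eAw /= !inE negbK.
by rewrite (negbTE wA) (negbTE wY).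
Qed.

Theorem mainTheorem4 (V : finType) (e : rel V) (A Y : V) (K : {set V}) :
  acyclic e ->
  A != Y ->
  e A Y ->
  (forall v : V, v != A -> v != Y -> ~~ connect e A v) ->
  K \subset ~: [set A; Y] ->
  exists Z : {set V},
    Z \subset ~: [set A; Y] /\
    K_irreducible e A Y K (K :|: Z) /\
    (forall z, z \in Z -> extended_confounding e A Y z).
Proof.
move=> acyc AY eAY nodesc KW; set W := ~: [set A; Y].
pose P (Z : {set V}) := K \subset Z /\ valid_adjustment e A Y Z.
have PW : `[< P W >] by apply/asboolP; split; last exact: valid_adjustment_setC.
have [Zm /minsetP[/asboolP[KZm [ZmW Zm_sep]] Zm_min] _] :=
  @minset_exists _ (fun Z => `[< P Z >]) W PW.
have Zm_irr : ~ exists B : {set V}, B \proper Zm /\ P B.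
  case=> B [BZm /asboolP PB]; move: (BZm).
  by rewrite {1}(Zm_min B PB (proper_sub BZm)) properxx.
have [AZm YZm] : A \notin Zm /\ Y \notin Zm.
  by split; apply/negP => /(subsetP ZmW); rewrite !inE eqxx ?orbT.
exists (Zm :\: K).
have -> : K :|: Zm :\: K = Zm by rewrite -{1}(setIidPr KZm) setID.
split; first exact: subset_trans (subsetDl _ _) ZmW.
split; first by split; [split | split].
move=> z /setDP[zZm zK].
have ZzW : Zm :\ z \subset W by apply: subset_trans (subD1set _ _) ZmW.
have /(dconnected_setD1_through AZm YZm Zm_sep)[zA zY] :
    dconnected (remove_edge e A Y) (Zm :\ z) A Y.
  apply: contrapT => sep; apply: Zm_irr; exists (Zm :\ z).
  split; [exact: properD1 | split; last by split].
  apply/subsetP => k kK; rewrite !inE (subsetP KZm k kK) andbT.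
  by apply: contraNneq zK => <-.
by split; [apply: subsetP ZmW z zZm | split; [exists (Zm :\ z) | exists (Zm :\ z)]].
Qed.
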